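(* Let $A\in\{0,1\}^{N\times n}$ and, for unit vectors $U_1,\dots,U_N,V_1,\dots,V_n\in\mathbb{R}^d$, $t>0$ and $b\in\mathbb{R}$, define $$\mathcal{L}(\{U_j\},\{V_i\};t,b)=\sum_{j\in[N],\,i\in[n]}\log\Bigl(1+\exp\bigl((-1)^{A_{ji}}(t\langle U_j,V_i\rangle-b)\bigr)\Bigr).$$ (1) If $\mathcal{L}(\{U_j\},\{V_i\};t,b)<\log 2$, then there exists $m>0$ such that $\{U_j\},\{V_i\}$ is a margin-$m$, relative-bias-$\frac bt$ embedding of $A$. (2) If $\{U_j\},\{V_i\}$ is a margin-$m_*$, relative-bias-$\tau$ embedding of $A$, where $$m_*:=\min\Bigl\{\min_{A_{ji}=1}(\langle U_j,V_i\rangle-\tau),\ \min_{A_{ji}=0}(\tau-\langle U_j,V_i\rangle)\Bigr\}>0,$$ then $\lim_{T\to\infty}\frac1T\log\mathcal{L}(\{U_j\},\{V_i\};T,T\tau)=-m_*$.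
   Context: For $A\in\{0,1\}^{N\times n}$, $m\ge0$ and $\tau\in\mathbb{R}$, unit vectors $U_1,\dots,U_N,V_1,\dots,V_n\in\mathbb{R}^d$ form a margin-$m$, relative-bias-$\tau$ embedding of $A$ if $\langle U_j,V_i\rangle\ge\tau+m$ whenever $A_{ji}=1$ and $\langle U_j,V_i\rangle\le\tau-m$ whenever $A_{ji}=0$. *)

From HB Require Import structures.
From mathcomp Require Import all_boot all_order all_algebra.
From mathcomp Require Import all_classical all_reals all_analysis.
Set Implicit Arguments. Unset Strict Implicit. Unset Printing Implicit Defensive.
Import Order.TTheory GRing.Theory Num.Theory.
Import numFieldNormedType.Exports.
Local Open Scope ring_scope.

Section Defs.
Variable R : realType.

Definition dotp (d : nat) (u v : 'rV[R]_d) : R := \sum_(k < d) u 0 k * v 0 k.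

Definition unit_vec (d : nat) (u : 'rV[R]_d) : Prop := dotp u u = 1.

(* margin-m, relative-bias-tau embedding of A (A j i = true means A_{ji} = 1) *)
Definition embedding (N n d : nat) (A : 'M[bool]_(N, n))
  (U : 'I_N -> 'rV[R]_d) (V : 'I_n -> 'rV[R]_d) (m tau : R) : Prop :=
  forall (j : 'I_N) (i : 'I_n),
    (A j i -> tau + m <= dotp (U j) (V i)) /\
    (~~ A j i -> dotp (U j) (V i) <= tau - m).

Definition loss (N n d : nat) (A : 'M[bool]_(N, n))
  (U : 'I_N -> 'rV[R]_d) (V : 'I_n -> 'rV[R]_d) (t b : R) : R :=
  \sum_(j < N) \sum_(i < n)
     ln (1 + expR ((-1) ^+ (A j i : nat) * (t * dotp (U j) (V i) - b))).

(* m_* = min { min_{A_ji=1} (<U_j,V_i> - tau), min_{A_ji=0} (tau - <U_j,V_i>) },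
   computed in the extended reals (a min over an empty index set is +oo). *)
Definition mstar (N n d : nat) (A : 'M[bool]_(N, n))
  (U : 'I_N -> 'rV[R]_d) (V : 'I_n -> 'rV[R]_d) (tau : R) : \bar R :=
  Order.min
    (\big[Order.min/+oo%E]_(j < N) \big[Order.min/+oo%E]_(i < n | A j i)
        (dotp (U j) (V i) - tau)%:E)
    (\big[Order.min/+oo%E]_(j < N) \big[Order.min/+oo%E]_(i < n | ~~ A j i)
        (tau - dotp (U j) (V i))%:E).

End Defs.

(* The loss is a sum of softplus terms [softplus (- t g)] over all pairs, where [g] is the signed
   gap between the inner product and the bias (positive exactly when the pair is on the correct
   side).  Since [softplus x < ln 2] iff [x < 0], a total loss below [ln 2] puts every pair on the
   correct side, and the smallest gap is a margin.  For the rate, [softplus x] lies between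
   [expR x / 2] (for [x <= 0]) and [expR x], so at scale [T] the loss is [exp (- T m_* )] up to a
   factor between [1/2] and the number of pairs; taking [ln] and dividing by [T] gives [- m_*]. *)
From HB Require Import structures.
From mathcomp Require Import all_boot all_order all_algebra.
From mathcomp Require Import all_classical all_reals all_analysis.
From mathcomp Require Import ring lra.
Set Implicit Arguments. Unset Strict Implicit. Unset Printing Implicit Defensive.
Import Order.TTheory GRing.Theory Num.Theory.
Import numFieldNormedType.Exports.
Local Open Scope classical_set_scope.
Local Open Scope ring_scope.

Section Softplus.
Variable R : realType.
Implicit Types x y : R.

Definition softplus x : R := ln (1 + expR x).

Lemma softplus_gt0 x : 0 < softplus x.
Proof. by rewrite ln_gt0 // ltrDl expR_gt0. Qed.

Lemma softplus_lt_ln2 x : (softplus x < ln 2) = (x < 0).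
Proof.
have ln1Dx_gt0 : 0 < 1 + expR x by rewrite addr_gt0 ?expR_gt0.
by rewrite /softplus ltr_ln ?posrE // -expR_lt1 -[ltRHS]/(1 + 1) ltrD2l.
Qed.

Lemma softplus_le_expR x : softplus x <= expR x.
Proof. by apply: le_ln1Dx; rewrite (lt_trans _ (expR_gt0 x)) ?ltrN10. Qed.

Lemma half_le_ln1D y : 0 < y -> y <= 1 -> y / 2 <= ln (1 + y).
Proof.
move=> y0 y1.
have y1D0 : 0 < 1 + y by lra.
have : -1 < - (y / (1 + y)) by rewrite ltrN2 ltr_pdivrMr //; lra.
move=> /le_ln1Dx; rewrite (_ : 1 - y / (1 + y) = (1 + y)^-1); last by field; lra.
rewrite lnV ?posrE // lerN2 => /(le_trans _); apply.
by rewrite ler_pM2l // lef_pV2 ?posrE //; lra.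
Qed.

Lemma half_expR_le_softplus x : x <= 0 -> expR x / 2 <= softplus x.
Proof. by move=> x_le0; apply: half_le_ln1D; rewrite ?expR_gt0 ?expR_le1. Qed.

End Softplus.

Section Asymptotics.
Variable R : realType.

Lemma invr_cvg0_pinfty : T^-1 @[T --> +oo%R] --> (0 : R).
Proof. by apply/gtr0_cvgV0; [exact: nbhs_pinfty_gt | exact: cvg_id]. Qed.

Lemma cvg_div_pinfty_of_affine_bounds (f : R -> R) (l a b : R) :
  (forall T, 0 < T -> l * T - a <= f T <= l * T + b) ->
  f T / T @[T --> +oo%R] --> l.
Proof.
move=> fab.
have cvg_shift c : l + c * T^-1 @[T --> +oo%R] --> l.
  by rewrite -[X in _ --> X]addr0 -(mulr0 c); apply: cvgD;
    [exact: cvg_cst | exact: cvgMl_tmp invr_cvg0_pinfty].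
apply: (squeeze_cvgr _ (cvg_shift (- a)) (cvg_shift b)).
near=> T; have T_gt0 : 0 < T by near: T; exact: nbhs_pinfty_gt.
have /andP[fa fb] := fab T T_gt0.
rewrite ler_pdivlMr // ler_pdivrMr // !mulrDl -!mulrA mulVf ?gt_eqF // !mulr1.
by rewrite fa fb.
Unshelve. all: end_near.
Qed.

End Asymptotics.

Section SoftplusSums.
Variables (R : realType) (I : finType).

Lemma le_sum_softplus (g : I -> R) i : softplus (g i) <= \sum_k softplus (g k).
Proof.
rewrite (bigD1 i) //= lerDl sumr_ge0 // => k _.
exact/ltW/softplus_gt0.
Qed.

Lemma sum_softplus_lt_ln2 (g : I -> R) : \sum_k softplus (g k) < ln 2 -> forall i, g i < 0.
Proof.
by move=> lt_ln2 i; rewrite -softplus_lt_ln2 (le_lt_trans (le_sum_softplus g i)).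
Qed.

Variables (g : I -> R) (i0 : I).
Hypotheses (g_min : forall i, g i0 <= g i) (g_i0_gt0 : 0 < g i0).

Lemma ln_sum_softplus_bounds T : 0 < T ->
  - g i0 * T - ln 2 <= ln (\sum_i softplus (- (T * g i)))
                    <= - g i0 * T + ln #|I|%:R.
Proof.
move=> T_gt0; set S := \sum_i _; set e := expR (- (T * g i0)).
have cardI_gt0 : (0 < #|I|%:R :> R) by rewrite ltr0n; apply/card_gt0P; exists i0.
have e_gt0 : 0 < e by rewrite expR_gt0.
have lowS : e / 2 <= S.
  apply: le_trans (le_sum_softplus (fun i => - (T * g i)) i0).
  by rewrite half_expR_le_softplus // oppr_le0 mulr_ge0 // ltW.
have upS : S <= #|I|%:R * e.
  rewrite mulr_natl -sumr_const; apply: ler_sum => i _.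
  by rewrite (le_trans (softplus_le_expR _)) // ler_expR lerN2 ler_pM2l.
have S_gt0 : 0 < S by rewrite (lt_le_trans _ lowS) ?divr_gt0.
rewrite mulNr mulrC; apply/andP; split.
- by rewrite -[X in X - _]expRK -ln_div ?posrE // ler_ln ?posrE ?divr_gt0.
- by rewrite addrC -[X in _ + X]expRK -lnM ?posrE // ler_ln ?posrE ?mulr_gt0.
Qed.

Lemma ln_sum_softplus_rate :
  ln (\sum_i softplus (- (T * g i))) / T @[T --> +oo%R] --> - g i0.
Proof. exact: cvg_div_pinfty_of_affine_bounds ln_sum_softplus_bounds. Qed.

End SoftplusSums.

Lemma exists_pos_lower_bound (R : realType) (I : finType) (f : I -> R) :
  (forall i, 0 < f i) -> exists2 m, 0 < m & forall i, m <= f i.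
Proof.
move=> f_gt0; exists (\big[Order.min/1]_i f i); last by move=> i; exact: bigmin_le.
by elim/big_ind: _ => // x y x_gt0 y_gt0; rewrite lt_min x_gt0 y_gt0.
Qed.

Section Embedding.
Variables (R : realType) (N n d : nat) (A : 'M[bool]_(N, n)).
Variables (U : 'I_N -> 'rV[R]_d) (V : 'I_n -> 'rV[R]_d).

Definition gap (tau : R) (p : 'I_N * 'I_n) : R :=
  if A p.1 p.2 then dotp (U p.1) (V p.2) - tau else tau - dotp (U p.1) (V p.2).

Lemma embeddingE m tau : embedding A U V m tau <-> forall p, m <= gap tau p.
Proof.
split=> [emb [j i] | gap_ge j i]; rewrite /gap /=.
- by have [+ +] := emb j i; case: (A j i) => /= [h _ | _ h]; have := h isT; lra.
- by have := gap_ge (j, i); rewrite /gap /=; case: (A j i) => /= h; split=> // _; lra.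
Qed.

Lemma loss_gapE t tau : loss A U V t (t * tau) = \sum_p softplus (- (t * gap tau p)).
Proof.
rewrite /loss pair_big; apply: eq_bigr => -[j i] _; rewrite /gap /softplus /=.
by case: (A j i); rewrite /= ?expr1 ?expr0; congr (ln (1 + expR _)); ring.
Qed.

Lemma mstarE tau : mstar A U V tau = \big[Order.min/+oo%E]_p (gap tau p)%:E.
Proof.
rewrite /mstar -bigmin_split.
transitivity (\big[Order.min/+oo%E]_j \big[Order.min/+oo%E]_i (gap tau (j, i))%:E).
  apply: eq_bigr => j _.
  rewrite bigmin_mkcond [X in Order.min _ X]bigmin_mkcond -bigmin_split.
  apply: eq_bigr => i _; rewrite /gap /=.
  by case: (A j i); rewrite /= ?miney ?minye.
by rewrite pair_bigA; apply: eq_bigr => -[].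
Qed.

Lemma mstar_attained tau : (0 < N)%N -> (0 < n)%N ->
  exists p, mstar A U V tau = (gap tau p)%:E.
Proof.
move=> N_gt0 n_gt0; rewrite mstarE.
by eexists; rewrite (bigmin_eq_arg _ (Ordinal N_gt0, Ordinal n_gt0)) // => p _; exact: leey.
Qed.

End Embedding.

Theorem propositionG4 (R : realType) (N n d : nat) (A : 'M[bool]_(N, n))
  (U : 'I_N -> 'rV[R]_d) (V : 'I_n -> 'rV[R]_d) :
  (0 < N)%N -> (0 < n)%N ->
  (forall j, unit_vec (U j)) -> (forall i, unit_vec (V i)) ->
  (forall t b : R, 0 < t -> loss A U V t b < ln 2 ->
     exists m : R, 0 < m /\ embedding A U V m (b / t)) /\
  (forall tau : R, (0 < mstar A U V tau)%E ->
     embedding A U V (fine (mstar A U V tau)) tau ->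
     ln (loss A U V T (T * tau)) / T @[T --> +oo%R]
       --> - fine (mstar A U V tau)).
Proof.
move=> N_gt0 n_gt0 _ _; split=> [t b t_gt0 | tau].
- have -> : loss A U V t b = loss A U V t (t * (b / t)).
    by rewrite mulrC divfK // gt_eqF.
  rewrite loss_gapE => /sum_softplus_lt_ln2 gap_neg.
  have gap_gt0 p : 0 < gap A U V (b / t) p.
    by have := gap_neg p; rewrite oppr_lt0 pmulr_rgt0.
  have [m m_gt0 m_le] := exists_pos_lower_bound gap_gt0.
  by exists m; split; last exact/embeddingE.
- move=> + /embeddingE; have [p0 ->] := mstar_attained A U V tau N_gt0 n_gt0.
  rewrite lte_fin /= => gap_gt0 gap_min.
  under eq_fun do rewrite loss_gapE.
  exact: ln_sum_softplus_rate.
Qed.
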